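(* If the formal deformations $(\{\cdot,\cdot\}^{[a,b,c]}_n)_{n\ge0}$ and $(\{\cdot,\cdot\}^{[a',b',c']}_n)_{n\ge0}$ of $\widetilde J$ are modular-isomorphic, then $c=c'$ and there exists $\xi\in\mathbb{C}^*$ such that $a'=\xi a$ and $b'=\xi^{-1}b$.
   Context: Let $\widetilde J=\mathbb{C}[E_4,E_6,A,B]$ be the polynomial algebra in four algebraically independent variables, bigraded by weight and index, where $E_4$ has weight $4$ and index $0$, $E_6$ has weight $6$ and index $0$, $A$ has weight $-2$ and index $1$, $B$ has weight $0$ and index $1$; $\widetilde J_{k,p}$ denotes the homogeneous component of weight $k$ and index $p$. For $(a,b)\in\mathbb{C}^2$, $S_{a,b}$ is the derivation of $\widetilde J$ with $S_{a,b}(E_4)=-\tfrac13E_6$, $S_{a,b}(E_6)=-\tfrac12E_4^2$, $S_{a,b}(A)=aB$, $S_{a,b}(B)=bE_4A$. For $c\in\mathbb{C}$ and $n\ge0$, $\{\cdot,\cdot\}^{[a,b,c]}_n$ is the bilinear map on $\widetilde J$ defined on homogeneous $f\in\widetilde J_{k,p}$, $g\in\widetilde J_{\ell,q}$ by $\{f,g\}^{[a,b,c]}_n=\sum_{r=0}^n(-1)^r\binom{k+cp+n-1}{n-r}\binom{\ell+cq+n-1}{r}S_{a,b}^r(f)\,S_{a,b}^{n-r}(g)$ (complex binomial coefficients). Two such formal deformations $(\{\cdot,\cdot\}^{[a,b,c]}_n)_n$ and $(\{\cdot,\cdot\}^{[a',b',c']}_n)_n$ are modular-isomorphic if there is a $\mathbb{C}$-linear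 bijection $\phi:\widetilde J\to\widetilde J$ mapping each $\widetilde J_{k,p}$ into $\widetilde J_{k,p}$ and such that $\phi(\{f,g\}^{[a,b,c]}_j)=\{\phi(f),\phi(g)\}^{[a',b',c']}_j$ for all $j\ge0$ and $f,g\in\widetilde J$. *)

From HB Require Import structures.
From mathcomp Require Import all_boot all_order all_algebra.
Set Implicit Arguments. Unset Strict Implicit. Unset Printing Implicit Defensive.
Import Order.TTheory GRing.Theory Num.Theory.
Local Open Scope ring_scope.

Section Jtilde.
Variable C : numClosedFieldType.

(* J~ = C[E4][E6][A][B] as nested univariate polynomials:
   innermost variable E4, then E6, then A, outermost B. *)
Definition Jt := {poly {poly {poly {poly C}}}}.

Definition cst (z : C) : Jt := (((z%:P)%:P)%:P)%:P.
Definition vE4 : Jt := ((('X)%:P)%:P)%:P.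
Definition vE6 : Jt := (('X)%:P)%:P.
Definition vA : Jt := ('X)%:P.
Definition vB : Jt := 'X.

Definition coefJ (f : Jt) (x y i j : nat) : C := f`_j`_i`_y`_x.

Definition mono (x y i j : nat) : Jt := vE4 ^+ x * vE6 ^+ y * vA ^+ i * vB ^+ j.

Definition wt (x y i : nat) : int := (4 * x + 6 * y)%:Z - (2 * i)%:Z.
Definition idx (i j : nat) : nat := (i + j)%N.

Definition homog (k : int) (p : nat) (f : Jt) : Prop :=
  forall x y i j, coefJ f x y i j != 0 -> wt x y i = k /\ idx i j = p.

Definition dB (f : Jt) : Jt := deriv f.
Definition dA (f : Jt) : Jt := map_poly (@deriv _) f.
Definition dE6 (f : Jt) : Jt := map_poly (map_poly (@deriv _)) f.
Definition dE4 (f : Jt) : Jt := map_poly (map_poly (map_poly (@deriv _))) f.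

Definition S (a b : C) (f : Jt) : Jt :=
  dE4 f * (cst (- (1 / 3%:R)) * vE6) + dE6 f * (cst (- (1 / 2%:R)) * vE4 ^+ 2)
  + dA f * (cst a * vB) + dB f * (cst b * vE4 * vA).

Definition Sit (a b : C) (r : nat) (f : Jt) : Jt := iter r (S a b) f.

Definition binomC (z : C) (m : nat) : C :=
  (\prod_(t < m) (z - t%:R)) / (m`!)%:R.

(* the bracket on homogeneous f in J~_{k,p}, g in J~_{l,q} *)
Definition brk_hom (a b c : C) (n : nat) (k : int) (p : nat) (l : int) (q : nat)
    (f g : Jt) : Jt :=
  \sum_(r < n.+1)
    cst ((-1) ^+ r * binomC (k%:~R + c * p%:R + n%:R - 1) (n - r)
                   * binomC (l%:~R + c * q%:R + n%:R - 1) r)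
    * (Sit a b r f * Sit a b (n - r) g).

(* bilinear extension to all of J~ (via the monomial basis) *)
Definition bracket (a b c : C) (n : nat) (f g : Jt) : Jt :=
  \sum_(j < size f) \sum_(i < size f`_j) \sum_(y < size f`_j`_i)
   \sum_(x < size f`_j`_i`_y)
  \sum_(j' < size g) \sum_(i' < size g`_j') \sum_(y' < size g`_j'`_i')
   \sum_(x' < size g`_j'`_i'`_y')
    cst (coefJ f x y i j * coefJ g x' y' i' j')
    * brk_hom a b c n (wt x y i) (idx i j) (wt x' y' i') (idx i' j')
        (mono x y i j) (mono x' y' i' j').

Definition clinear (phi : Jt -> Jt) : Prop :=
  forall (z : C) (f g : Jt), phi (cst z * f + g) = cst z * phi f + phi g.

Definition modular_isomorphic (a b c a' b' c' : C) : Prop :=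
  exists phi : Jt -> Jt,
    [/\ clinear phi, bijective phi,
        (forall k p f, homog k p f -> homog k p (phi f)) &
        (forall n f g, phi (bracket a b c n f g) = bracket a' b' c' n (phi f) (phi g))].

End Jtilde.

From HB Require Import structures.
From mathcomp Require Import all_boot all_order all_algebra.
From mathcomp Require Import ring zify.
Set Implicit Arguments. Unset Strict Implicit. Unset Printing Implicit Defensive.
Import GRing.Theory Num.Theory.
Local Open Scope ring_scope.

(* A modular isomorphism phi preserves weight and index, and E4, E6, A, B are
   each the only monomial of their bidegree, so phi rescales them by nonzero
   al, be, ga, de.  The bracket of order 0 is the product, so phi rescales every
   monomial multiplicatively.  Comparing the order-1 brackets
     {E4, E6}_1 = -2 E4^3 + 2 E6^2,
     {E4, A}_1  = 4a E4 B + (c - 2)/3 E6 A,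
     {E4, B}_1  = 4b E4^2 A + c/3 E6 B
   with their images gives be = al^2 = al, hence al = be = 1, then c = c',
   a' = (de/ga) a and b' = (ga/de) b. *)

Lemma map_polyX0 (R S : nzRingType) (f : {additive R -> S}) :
  f 1 = 0 -> map_poly f 'X = 0.
Proof.
by move=> f1; apply/polyP => k; rewrite coef_map coefX coef0; case: eqP; rewrite ?raddf0.
Qed.

Lemma map_poly1_eq0 (R S : nzRingType) (f : {additive R -> S}) :
  f 1 = 0 -> map_poly f 1 = 0.
Proof. by move=> f1; rewrite -polyC1 map_polyC f1 polyC0. Qed.

Definition psum (R : nzRingType) (V : nmodType) (p : {poly R}) (G : nat -> R -> V) : V :=
  \sum_(k < size p) G k p`_k.

Section PolySum.
Variables (R : nzRingType) (V : nmodType).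
Implicit Types (p : {poly R}) (G : nat -> R -> V).

Lemma psum0 G : psum 0 G = 0.
Proof. by rewrite /psum size_poly0 big_ord0. Qed.

Lemma psum_eq0 p G : (forall k r, G k r = 0) -> psum p G = 0.
Proof. by move=> G0; apply: big1 => k _; apply: G0. Qed.

Lemma coef_CXn (q : R) n k : (q%:P * 'X^n)`_k = if k == n then q else 0.
Proof. by rewrite coefCM coefXn; case: eqP; rewrite ?mulr1 ?mulr0. Qed.

Lemma psum_CXn (q : R) n G : (forall k, G k 0 = 0) -> psum (q%:P * 'X^n) G = G n q.
Proof.
move=> G0; have [->|q0] := eqVneq q 0; first by rewrite polyC0 mul0r psum0.
rewrite /psum size_mulXn ?polyC_eq0 // size_polyC q0 addn1 big_ord_recr /=.
rewrite big1 ?add0r => [|k _]; first by rewrite coef_CXn eqxx.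
by rewrite coef_CXn ltn_eqF.
Qed.

End PolySum.

Definition isolated x y i j := forall x' y' i' j',
  wt x' y' i' = wt x y i -> idx i' j' = idx i j -> [/\ x' = x, y' = y, i' = i & j' = j].

Lemma isolated_E4 : isolated 1 0 0 0. Proof. by rewrite /isolated /wt /idx => *; split; lia. Qed.
Lemma isolated_E6 : isolated 0 1 0 0. Proof. by rewrite /isolated /wt /idx => *; split; lia. Qed.
Lemma isolated_A : isolated 0 0 1 0. Proof. by rewrite /isolated /wt /idx => *; split; lia. Qed.
Lemma isolated_B : isolated 0 0 0 1. Proof. by rewrite /isolated /wt /idx => *; split; lia. Qed.

Section Jtilde.
Variable C : numClosedFieldType.
Local Notation Jt := (Jt C).
Local Notation E4 := (vE4 C).
Local Notation E6 := (vE6 C).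
Local Notation A := (vA C).
Local Notation B := (vB C).

Lemma dB_E4 : dB E4 = 0. Proof. exact: derivC. Qed.
Lemma dB_E6 : dB E6 = 0. Proof. exact: derivC. Qed.
Lemma dB_A : dB A = 0. Proof. exact: derivC. Qed.
Lemma dB_B : dB B = 1. Proof. exact: derivX. Qed.
Lemma dA_E4 : dA E4 = 0. Proof. by rewrite /dA /vE4 map_polyC /= derivC polyC0. Qed.
Lemma dA_E6 : dA E6 = 0. Proof. by rewrite /dA /vE6 map_polyC /= derivC polyC0. Qed.
Lemma dA_A : dA A = 1. Proof. by rewrite /dA /vA map_polyC /= derivX polyC1. Qed.
Lemma dA_B : dA B = 0. Proof. by rewrite /dA /vB map_polyX0 //= -polyC1 derivC. Qed.
Lemma dE6_E4 : dE6 E4 = 0.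
Proof. by rewrite /dE6 /vE4; do 2!rewrite map_polyC /=; rewrite derivC !polyC0. Qed.
Lemma dE6_E6 : dE6 E6 = 1.
Proof. by rewrite /dE6 /vE6; do 2!rewrite map_polyC /=; rewrite derivX !polyC1. Qed.
Lemma dE6_A : dE6 A = 0.
Proof. by rewrite /dE6 /vA map_polyC /= map_polyX0 ?polyC0 //; exact: derivC. Qed.
Lemma dE6_B : dE6 B = 0.
Proof. by rewrite /dE6 /vB map_polyX0 //= map_poly1_eq0 //; exact: derivC. Qed.
Lemma dE4_E4 : dE4 E4 = 1.
Proof. by rewrite /dE4 /vE4; do 3!rewrite map_polyC /=; rewrite derivX !polyC1. Qed.
Lemma dE4_E6 : dE4 E6 = 0.
Proof.
by rewrite /dE4 /vE6; do 2!rewrite map_polyC /=; rewrite map_polyX0 ?polyC0 //; exact: derivC.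
Qed.
Lemma dE4_A : dE4 A = 0.
Proof.
by rewrite /dE4 /vA map_polyC /= map_polyX0 ?polyC0 //= map_poly1_eq0 //; exact: derivC.
Qed.
Lemma dE4_B : dE4 B = 0.
Proof.
rewrite /dE4 /vB map_polyX0 //= -polyC1 map_polyC /= map_poly1_eq0 ?polyC0 //.
exact: derivC.
Qed.

Definition cst_rmorph : {rmorphism C -> Jt} :=
  (@polyC _ \o @polyC _ \o @polyC _ \o @polyC C)%FUN.

Lemma cstE z : cst z = cst_rmorph z. Proof. by []. Qed.

Lemma cst0 : cst 0 = 0 :> Jt. Proof. by rewrite cstE rmorph0. Qed.
Lemma cst1 : cst 1 = 1 :> Jt. Proof. by rewrite cstE rmorph1. Qed.
Lemma cstM u v : cst (u * v) = cst u * cst v :> Jt. Proof. by rewrite !cstE rmorphM. Qed.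
Lemma cstN u : cst (- u) = - cst u :> Jt. Proof. by rewrite !cstE rmorphN. Qed.

(* [ring] on the concrete nested polynomials compares atoms by conversion, which
   is very slow: abstract the scalar embedding and the generators first. *)
Ltac ring_atoms := rewrite ?cstE; generalize cst_rmorph E4 E6 A B; intros; ring.

Lemma S_E4 a b : S a b E4 = cst (- (1 / 3%:R)) * E6.
Proof. by rewrite /S dE4_E4 dE6_E4 dA_E4 dB_E4; ring_atoms. Qed.
Lemma S_E6 a b : S a b E6 = cst (- (1 / 2%:R)) * E4 ^+ 2.
Proof. by rewrite /S dE4_E6 dE6_E6 dA_E6 dB_E6; ring_atoms. Qed.
Lemma S_A a b : S a b A = cst a * B.
Proof. by rewrite /S dE4_A dE6_A dA_A dB_A; ring_atoms. Qed.
Lemma S_B a b : S a b B = cst b * E4 * A.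
Proof. by rewrite /S dE4_B dE6_B dA_B dB_B; ring_atoms. Qed.

Lemma mono_E4 : mono C 1 0 0 0 = E4. Proof. by rewrite /mono; ring_atoms. Qed.
Lemma mono_E6 : mono C 0 1 0 0 = E6. Proof. by rewrite /mono; ring_atoms. Qed.
Lemma mono_A : mono C 0 0 1 0 = A. Proof. by rewrite /mono; ring_atoms. Qed.
Lemma mono_B : mono C 0 0 0 1 = B. Proof. by rewrite /mono; ring_atoms. Qed.

Lemma monoM x y i j x' y' i' j' :
  mono C x y i j * mono C x' y' i' j' = mono C (x + x') (y + y') (i + i') (j + j').
Proof. by rewrite /mono !exprD; ring_atoms. Qed.

Definition cmono (u : C) x y i j : Jt := cst u * mono C x y i j.

Lemma cmono_nested u x y i j :
  cmono u x y i j = ((((u%:P * 'X^x)%:P * 'X^y)%:P * 'X^i)%:P) * 'X^j.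
Proof. by rewrite /cmono /cst /mono /vE4 /vE6 /vA /vB -!rmorphXn !mulrA -!rmorphM. Qed.

Lemma coefJ_cmono u x0 y0 i0 j0 x y i j :
  coefJ (cmono u x0 y0 i0 j0) x y i j =
  if [&& x == x0, y == y0, i == i0 & j == j0] then u else 0.
Proof.
rewrite /coefJ cmono_nested coef_CXn; case: (j =P j0) => _; last by rewrite !coef0 !andbF.
rewrite coef_CXn; case: (i =P i0) => _; last by rewrite !coef0 !andbF.
rewrite coef_CXn; case: (y =P y0) => _; last by rewrite !coef0 !andbF.
by rewrite coef_CXn; case: (x =P x0); rewrite ?andbF ?andbT.
Qed.

Definition psumJ (V : nmodType) (f : Jt) (F : nat -> nat -> nat -> nat -> C -> V) : V :=
  psum f (fun j fj => psum fj (fun i fi =>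
    psum fi (fun y fy => psum fy (fun x u => F x y i j u)))).

Lemma psumJ_eq0 (V : nmodType) f (F : nat -> nat -> nat -> nat -> C -> V) :
  (forall x y i j u, F x y i j u = 0) -> psumJ f F = 0.
Proof. by move=> F0; do 4!apply: psum_eq0 => ? ?. Qed.

Lemma psumJ_cmono (V : nmodType) u x y i j (F : nat -> nat -> nat -> nat -> C -> V) :
  (forall x y i j, F x y i j 0 = 0) -> psumJ (cmono u x y i j) F = F x y i j u.
Proof. by move=> F0; rewrite /psumJ cmono_nested !psum_CXn // => *; rewrite psum0. Qed.

Lemma bracketE a b c n f g : bracket a b c n f g =
  psumJ f (fun x y i j u => psumJ g (fun x' y' i' j' v =>
    cst (u * v) * brk_hom a b c n (wt x y i) (idx i j) (wt x' y' i') (idx i' j')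
                   (mono C x y i j) (mono C x' y' i' j'))).
Proof. reflexivity. Qed.

Lemma bracket_cmono a b c n u v x y i j x' y' i' j' :
  bracket a b c n (cmono u x y i j) (cmono v x' y' i' j') =
  cst (u * v) * brk_hom a b c n (wt x y i) (idx i j) (wt x' y' i') (idx i' j')
                 (mono C x y i j) (mono C x' y' i' j').
Proof.
have cst0M w (h : Jt) : cst w = 0 -> cst w * h = 0 by move=> ->; rewrite mul0r.
rewrite bracketE psumJ_cmono => [|x0 y0 i0 j0].
  rewrite psumJ_cmono => // x0 y0 i0 j0.
  by apply: cst0M; rewrite mulr0 cst0.
by apply: psumJ_eq0 => *; apply: cst0M; rewrite mul0r cst0.
Qed.

Lemma cmono0 x y i j : cmono 0 x y i j = 0.
Proof. by rewrite /cmono cst0 mul0r. Qed.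

Lemma cst_cmono z u x y i j : cst z * cmono u x y i j = cmono (z * u) x y i j.
Proof. by rewrite /cmono mulrA cstM. Qed.

Lemma cmonoE u x y i j : cmono u x y i j = cst u * cmono 1 x y i j.
Proof. by rewrite cst_cmono mulr1. Qed.

Lemma cmono_neq0 u x y i j : u != 0 -> cmono u x y i j != 0.
Proof.
move=> u0; apply: contra_neq u0 => /(congr1 (fun f => coefJ f x y i j)).
by rewrite coefJ_cmono !eqxx /coefJ !coef0.
Qed.

Lemma coefJD (f g : Jt) x y i j : coefJ (f + g) x y i j = coefJ f x y i j + coefJ g x y i j.
Proof. by rewrite /coefJ !coefD. Qed.

Lemma coefJ_cmono_pairl u1 u2 x1 y1 i1 j1 x2 y2 i2 j2 : x1 != x2 ->
  coefJ (cmono u1 x1 y1 i1 j1 + cmono u2 x2 y2 i2 j2) x1 y1 i1 j1 = u1.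
Proof. by move=> x12; rewrite coefJD !coefJ_cmono !eqxx (negbTE x12) addr0. Qed.

Lemma coefJ_cmono_pairr u1 u2 x1 y1 i1 j1 x2 y2 i2 j2 : x1 != x2 ->
  coefJ (cmono u1 x1 y1 i1 j1 + cmono u2 x2 y2 i2 j2) x2 y2 i2 j2 = u2.
Proof. by move=> x12; rewrite coefJD !coefJ_cmono !eqxx eq_sym (negbTE x12) add0r. Qed.

Lemma cmono_pair_inj u1 u2 v1 v2 x1 y1 i1 j1 x2 y2 i2 j2 : x1 != x2 ->
  cmono u1 x1 y1 i1 j1 + cmono u2 x2 y2 i2 j2 =
    cmono v1 x1 y1 i1 j1 + cmono v2 x2 y2 i2 j2 ->
  u1 = v1 /\ u2 = v2.
Proof.
move=> x12 e; split.
  by rewrite -(coefJ_cmono_pairl u1 u2 y1 i1 j1 y2 i2 j2 x12) e coefJ_cmono_pairl.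
by rewrite -(coefJ_cmono_pairr u1 u2 y1 i1 j1 y2 i2 j2 x12) e coefJ_cmono_pairr.
Qed.

Lemma coefJ_inj (f g : Jt) : (forall x y i j, coefJ f x y i j = coefJ g x y i j) -> f = g.
Proof. by move=> fg; do 4!apply/polyP => ?; apply: fg. Qed.

Lemma homog_cmono u x y i j : homog (wt x y i) (idx i j) (cmono u x y i j).
Proof.
move=> x' y' i' j'; rewrite coefJ_cmono.
by case: ifP => [/and4P[/eqP-> /eqP-> /eqP-> /eqP->] | _]; rewrite ?eqxx.
Qed.

Lemma homog_isolated x y i j (f : Jt) : isolated x y i j ->
  homog (wt x y i) (idx i j) f -> f = cmono (coefJ f x y i j) x y i j.
Proof.
move=> iso hf; apply: coefJ_inj => x' y' i' j'; rewrite coefJ_cmono.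
case: ifP => [/and4P[/eqP-> /eqP-> /eqP-> /eqP->] // | ne].
apply/eqP; apply: contraFT ne => /hf[wt_eq idx_eq].
by have [-> -> -> ->] := iso _ _ _ _ wt_eq idx_eq; rewrite !eqxx.
Qed.

Lemma binomC0 (z : C) : binomC z 0 = 1.
Proof. by rewrite /binomC big_ord0 divr1. Qed.
Lemma binomC1 (z : C) : binomC z 1 = z.
Proof. by rewrite /binomC big_ord1 subr0 divr1. Qed.

Lemma brk_hom0 a b c k p l q (f g : Jt) : brk_hom a b c 0 k p l q f g = f * g.
Proof.
rewrite /brk_hom big_ord1 /= expr0 !binomC0 !mulr1 cst1.
exact: mul1r.
Qed.

Lemma brk_hom1 a b c k p l q (f g : Jt) : brk_hom a b c 1 k p l q f g =
  cst (k%:~R + c * p%:R) * (f * S a b g) - cst (l%:~R + c * q%:R) * (S a b f * g).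
Proof.
rewrite /brk_hom big_ord_recr big_ord1 /= expr0 expr1 !binomC0 !binomC1 !addrK.
have kE : 1 * (k%:~R + c * p%:R) * 1 = k%:~R + c * p%:R by rewrite mulr1 mul1r.
have lE : -1 * 1 * (l%:~R + c * q%:R) = - (l%:~R + c * q%:R) by rewrite mulr1 mulN1r.
by rewrite kE lE cstN mulNr.
Qed.

Lemma bracket0_cmono a b c u v x y i j x' y' i' j' :
  bracket a b c 0 (cmono u x y i j) (cmono v x' y' i' j') =
  cmono (u * v) (x + x') (y + y') (i + i') (j + j').
Proof. by rewrite bracket_cmono brk_hom0 monoM. Qed.

Lemma kappa_E4 (c : C) : (wt 1 0 0)%:~R + c * (idx 0 0)%:R = 4.
Proof. by rewrite mulr0 addr0. Qed.
Lemma kappa_E6 (c : C) : (wt 0 1 0)%:~R + c * (idx 0 0)%:R = 6.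
Proof. by rewrite mulr0 addr0. Qed.
Lemma kappa_A (c : C) : (wt 0 0 1)%:~R + c * (idx 1 0)%:R = c - 2.
Proof. by rewrite mulr1 addrC. Qed.
Lemma kappa_B (c : C) : (wt 0 0 0)%:~R + c * (idx 0 1)%:R = c.
Proof. by rewrite mulr1 add0r. Qed.

Lemma bracket_E4E6 a b c u v :
  bracket a b c 1 (cmono u 1 0 0 0) (cmono v 0 1 0 0) =
  cmono (u * v * -2) 3 0 0 0 + cmono (u * v * 2) 0 2 0 0.
Proof.
rewrite bracket_cmono brk_hom1 mono_E4 mono_E6 S_E6 S_E4 kappa_E4 kappa_E6.
transitivity (cmono (u * v * (4 * - (1 / 2%:R))) 3 0 0 0 +
              cmono (u * v * - (6 * - (1 / 3%:R))) 0 2 0 0).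
  by rewrite /cmono /mono; ring_atoms.
have -> : u * v * (4 * - (1 / 2%:R)) = u * v * -2 by field.
by have -> : u * v * - (6 * - (1 / 3%:R)) = u * v * 2 by field.
Qed.

Lemma bracket_E4A a b c u v :
  bracket a b c 1 (cmono u 1 0 0 0) (cmono v 0 0 1 0) =
  cmono (u * v * (4 * a)) 1 0 0 1 + cmono (u * v * ((c - 2) / 3)) 0 1 1 0.
Proof.
rewrite bracket_cmono brk_hom1 mono_E4 mono_A S_A S_E4 kappa_E4 kappa_A.
transitivity (cmono (u * v * (4 * a)) 1 0 0 1 +
              cmono (u * v * - ((c - 2) * - (1 / 3%:R))) 0 1 1 0).
  by rewrite /cmono /mono; ring_atoms.
by have -> : u * v * - ((c - 2) * - (1 / 3%:R)) = u * v * ((c - 2) / 3) by field.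
Qed.

Lemma bracket_E4B a b c u v :
  bracket a b c 1 (cmono u 1 0 0 0) (cmono v 0 0 0 1) =
  cmono (u * v * (4 * b)) 2 0 1 0 + cmono (u * v * (c / 3)) 0 1 0 1.
Proof.
rewrite bracket_cmono brk_hom1 mono_E4 mono_B S_B S_E4 kappa_E4 kappa_B.
transitivity (cmono (u * v * (4 * b)) 2 0 1 0 +
              cmono (u * v * - (c * - (1 / 3%:R))) 0 1 0 1).
  by rewrite /cmono /mono; ring_atoms.
by have -> : u * v * - (c * - (1 / 3%:R)) = u * v * (c / 3) by field.
Qed.

Section ModularIsomorphism.
Variables (a b c a' b' c' : C) (phi : Jt -> Jt).
Hypothesis phi_lin : clinear phi.
Hypothesis phi_inj : injective phi.
Hypothesis phi_homog : forall k p f, homog k p f -> homog k p (phi f).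
Hypothesis phi_bracket :
  forall n f g, phi (bracket a b c n f g) = bracket a' b' c' n (phi f) (phi g).

Lemma phiD f g : phi (f + g) = phi f + phi g.
Proof. by have := phi_lin 1 f g; rewrite cst1 (mul1r f) (mul1r (phi f)). Qed.

Lemma phi0 : phi 0 = 0.
Proof. by apply: (@addrI _ (phi 0)); rewrite -phiD !addr0. Qed.

Lemma phiZ z f : phi (cst z * f) = cst z * phi f.
Proof. by have := phi_lin z f 0; rewrite phi0 !addr0. Qed.

Lemma phi_isolated x y i j : isolated x y i j ->
  exists2 w, w != 0 & phi (cmono 1 x y i j) = cmono w x y i j.
Proof.
move=> iso; have := homog_isolated iso (phi_homog (@homog_cmono 1 x y i j)).
set w := coefJ _ _ _ _ _ => e; exists w => //.
apply: contra_neq (@cmono_neq0 1 x y i j (oner_neq0 C)) => w0.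
by apply: phi_inj; rewrite e w0 cmono0 phi0.
Qed.

Lemma phi_cmonoM {u v x y i j x' y' i' j'} :
  phi (cmono 1 x y i j) = cmono u x y i j ->
  phi (cmono 1 x' y' i' j') = cmono v x' y' i' j' ->
  phi (cmono 1 (x + x') (y + y') (i + i') (j + j')) =
  cmono (u * v) (x + x') (y + y') (i + i') (j + j').
Proof.
by move=> hu hv; rewrite -[1]mulr1 -(bracket0_cmono a b c) phi_bracket hu hv bracket0_cmono.
Qed.

Lemma phi_cmono_pair {u1 u2 v1 v2 w1 w2 x1 y1 i1 j1 x2 y2 i2 j2} :
  phi (cmono 1 x1 y1 i1 j1) = cmono w1 x1 y1 i1 j1 ->
  phi (cmono 1 x2 y2 i2 j2) = cmono w2 x2 y2 i2 j2 ->
  phi (cmono u1 x1 y1 i1 j1 + cmono u2 x2 y2 i2 j2) =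
    cmono v1 x1 y1 i1 j1 + cmono v2 x2 y2 i2 j2 ->
  x1 != x2 -> u1 * w1 = v1 /\ u2 * w2 = v2.
Proof.
move=> h1 h2; rewrite phiD cmonoE phiZ h1 (cmonoE u2) phiZ h2 !cst_cmono => e x12.
exact: cmono_pair_inj e.
Qed.

Lemma phi_bracket_pair {u v w1 w2} {K1 K2 : C -> C -> C -> C}
    {x y i j x' y' i' j' x1 y1 i1 j1 x2 y2 i2 j2} :
  phi (cmono 1 x y i j) = cmono u x y i j ->
  phi (cmono 1 x' y' i' j') = cmono v x' y' i' j' ->
  phi (cmono 1 x1 y1 i1 j1) = cmono w1 x1 y1 i1 j1 ->
  phi (cmono 1 x2 y2 i2 j2) = cmono w2 x2 y2 i2 j2 ->
  (forall a b c u v, bracket a b c 1 (cmono u x y i j) (cmono v x' y' i' j') =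
     cmono (u * v * K1 a b c) x1 y1 i1 j1 + cmono (u * v * K2 a b c) x2 y2 i2 j2) ->
  x1 != x2 ->
  K1 a b c * w1 = u * v * K1 a' b' c' /\ K2 a b c * w2 = u * v * K2 a' b' c'.
Proof.
move=> hu hv h1 h2 hK; have := phi_bracket 1 (cmono 1 x y i j) (cmono 1 x' y' i' j').
by rewrite hu hv !hK !mul1r => /(phi_cmono_pair h1 h2).
Qed.

End ModularIsomorphism.

End Jtilde.

Lemma parameters_from_scalars (F : numFieldType) (a b c a' b' c' al be ga de : F) :
  al != 0 -> ga != 0 -> de != 0 ->
  -2 * (al * al * al) = al * be * -2 ->
  2 * (be * be) = al * be * 2 ->
  4 * a * (al * de) = al * ga * (4 * a') ->
  (c - 2) / 3 * (be * ga) = al * ga * ((c' - 2) / 3) ->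
  4 * b * (al * al * ga) = al * de * (4 * b') ->
  c = c' /\ exists xi : F, [/\ xi != 0, a' = xi * a & b' = xi^-1 * b].
Proof.
move=> al0 ga0 de0 e1 e2 e3 e4 e5.
have al2 : al * al = be.
  apply: (mulfI (_ : -2 * al != 0)); first by rewrite mulf_neq0 ?oppr_eq0 ?pnatr_eq0.
  by transitivity (-2 * (al * al * al)); [ring | rewrite e1; ring].
have be0 : be != 0 by rewrite -al2 mulf_neq0.
have be_al : be = al.
  apply: (mulfI (_ : 2 * be != 0)); first by rewrite mulf_neq0 ?pnatr_eq0.
  by transitivity (2 * (be * be)); [ring | rewrite e2; ring].
have al1 : al = 1 by apply: (mulIf al0); rewrite mul1r al2.
move: e3 e4 e5; rewrite be_al al1 => e3 e4 e5; split.
  apply: (mulIf (_ : ga / 3 != 0)); first by rewrite mulf_neq0 ?invr_eq0 ?pnatr_eq0.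
  by transitivity ((c - 2) / 3 * (1 * ga) + 2 * ga / 3); [field | rewrite e4; field].
exists (de / ga); split; first by rewrite mulf_neq0 ?invr_eq0.
  apply: (mulfI (_ : 4 * ga != 0)); first by rewrite mulf_neq0 ?pnatr_eq0.
  by transitivity (1 * ga * (4 * a')); [ring | rewrite -e3; field].
rewrite invf_div; apply: (mulfI (_ : 4 * de != 0)); first by rewrite mulf_neq0 ?pnatr_eq0.
by transitivity (1 * de * (4 * b')); [ring | rewrite -e5; field].
Qed.

Theorem mainTheorem3 (C : numClosedFieldType) (a b c a' b' c' : C) :
  modular_isomorphic a b c a' b' c' ->
  c = c' /\ exists xi : C, [/\ xi != 0, a' = xi * a & b' = xi^-1 * b].
Proof.
case=> phi [lin /bij_inj inj hom brk].
have [al al0 pE4] := phi_isolated lin inj hom isolated_E4.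
have [be _ pE6] := phi_isolated lin inj hom isolated_E6.
have [ga ga0 pA] := phi_isolated lin inj hom isolated_A.
have [de de0 pB] := phi_isolated lin inj hom isolated_B.
have pE4E4 := phi_cmonoM brk pE4 pE4.
have [e1 e2] := phi_bracket_pair lin brk pE4 pE6 (phi_cmonoM brk pE4E4 pE4)
  (phi_cmonoM brk pE6 pE6) (@bracket_E4E6 C) isT.
have [e3 e4] := phi_bracket_pair lin brk pE4 pA (phi_cmonoM brk pE4 pB)
  (phi_cmonoM brk pE6 pA) (@bracket_E4A C) isT.
have [e5 _] := phi_bracket_pair lin brk pE4 pB (phi_cmonoM brk pE4E4 pA)
  (phi_cmonoM brk pE6 pB) (@bracket_E4B C) isT.
exact: parameters_from_scalars al0 ga0 de0 e1 e2 e3 e4 e5.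
Qed.
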